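(* Let $f\in\mathcal{H}_{\rm fin}$ be not identically $0$, satisfying the geometric assumptions, and of level $N$. If $y\in\mathbb{Q}_+$ controls the support of $f$, then $yN\in\mathbb{N}$ and $N/y\in\mathbb{N}$.
   Context: $\mathcal{H}_{\rm fin}$ is the space of locally constant functions on $\mathrm{GL}_2(\mathbb{A}_{\rm fin})$ invariant under and compactly supported modulo the center $Z=Z(\mathbb{A}_{\rm fin})$. $K=\mathrm{GL}_2(\widehat{\mathbb{Z}})$, $K(N)$ the principal congruence subgroup of level $N$, and the level of $f$ is the minimal $N$ with $f$ bi-$K(N)$-invariant. $a(y)=\mathrm{diag}(y,1)$. Geometric assumptions: (i) $f$ is bi-$A(\widehat{\mathbb{Z}})$-invariant where $A(\widehat{\mathbb{Z}})=\{a(u):u\in\widehat{\mathbb{Z}}^\times\}$; (ii) $\mathrm{supp}\, f\subseteq a(y)^{-1}ZKa(y)$ for some $y\in\mathbb{Q}_+$, and any such $y$ is said to control the support of $f$. *)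

From HB Require Import structures.
From mathcomp Require Import all_boot all_order all_algebra.
From mathcomp Require Import complex.
From mathcomp Require Import Rstruct.
Set Implicit Arguments. Unset Strict Implicit. Unset Printing Implicit Defensive.
Import Order.TTheory GRing.Theory Num.Theory.
Local Open Scope ring_scope.

(* A_fin = lim_n A_fin / n Zhat = lim_n Q / nZ.
   An adele x is represented canonically by the family (x_n)_{n>=1},
   x_n in [0,n) the representative of x mod n Zhat (a rational);
   index 0 is unused and set to 0. *)
Definition rawA := nat -> rat.

Definition modq (r : rat) (n : nat) : rat :=
  if n == 0%N then 0 else r - n%:R * (Num.floor (r / n%:R))%:~R.

Definition isInt (r : rat) : Prop := denq r = 1.

Definition validA (x : rawA) : Prop :=
  x 0%N = 0 /\
  (forall n, (0 < n)%N -> 0 <= x n /\ x n < n%:R) /\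
  (forall n m, (0 < n)%N -> (0 < m)%N -> (n %| m)%N -> isInt ((x m - x n) / n%:R)).

Definition ratA (q : rat) : rawA := fun n => modq q n.
Definition azero : rawA := ratA 0.
Definition aone : rawA := ratA 1.
Definition aadd (x y : rawA) : rawA := fun n => modq (x n + y n) n.
Definition aneg (x : rawA) : rawA := fun n => modq (- x n) n.
Definition asub (x y : rawA) : rawA := aadd x (aneg y).
(* product: x*y mod n is computed from x, y mod nD, D = den(x_1) den(y_1) *)
Definition amul (x y : rawA) : rawA := fun n =>
  let D := (absz (denq (x 1%N)) * absz (denq (y 1%N)))%N in
  modq (x (n * D)%N * y (n * D)%N) n.

(* Zhat = { x : x mod Zhat = 0 };  N Zhat = { x : x mod N Zhat = 0 } *)
Definition inZhat (x : rawA) : Prop := validA x /\ x 1%N = 0.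
Definition inNZhat (N : nat) (x : rawA) : Prop := validA x /\ x N = 0.
Definition unitA (x : rawA) : Prop :=
  validA x /\ exists w, validA w /\ amul x w = aone /\ amul w x = aone.
Definition unitZhat (x : rawA) : Prop :=
  inZhat x /\ exists w, inZhat w /\ amul x w = aone /\ amul w x = aone.

Record M2 := mkM2 { e11 : rawA; e12 : rawA; e21 : rawA; e22 : rawA }.

Definition mmul (g h : M2) : M2 :=
  mkM2 (aadd (amul (e11 g) (e11 h)) (amul (e12 g) (e21 h)))
       (aadd (amul (e11 g) (e12 h)) (amul (e12 g) (e22 h)))
       (aadd (amul (e21 g) (e11 h)) (amul (e22 g) (e21 h)))
       (aadd (amul (e21 g) (e12 h)) (amul (e22 g) (e22 h))).
Definition mone : M2 := mkM2 aone azero azero aone.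
Definition entries_in (P : rawA -> Prop) (g : M2) : Prop :=
  P (e11 g) /\ P (e12 g) /\ P (e21 g) /\ P (e22 g).

Definition inG (g : M2) : Prop :=
  entries_in validA g /\
  exists h, entries_in validA h /\ mmul g h = mone /\ mmul h g = mone.

Definition inK (k : M2) : Prop :=
  entries_in inZhat k /\
  exists h, entries_in inZhat h /\ mmul k h = mone /\ mmul h k = mone.

Definition inKN (N : nat) (k : M2) : Prop :=
  inK k /\
  inNZhat N (asub (e11 k) aone) /\ inNZhat N (e12 k) /\
  inNZhat N (e21 k) /\ inNZhat N (asub (e22 k) aone).

Definition inZ (z : M2) : Prop :=
  exists t, unitA t /\ z = mkM2 t azero azero t.

Definition inAZhat (g : M2) : Prop :=
  exists u, unitZhat u /\ g = mkM2 u azero azero aone.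

Definition a_ (y : rat) : M2 := mkM2 (ratA y) azero azero aone.

Definition CC := (Rdefinitions.R)[i].
Definition fnG := M2 -> CC.

Definition Z_invariant (f : fnG) : Prop :=
  forall z g, inZ z -> inG g -> f (mmul z g) = f g.

(* locally constant: constant on a neighbourhood g K(M) of each g
   (the g K(M), M >= 1, form a neighbourhood basis of g) *)
Definition locally_constant (f : fnG) : Prop :=
  forall g, inG g -> exists M : nat, (0 < M)%N /\
    forall k, inKN M k -> f (mmul g k) = f g.

(* compactly supported modulo Z: the support is contained in a finite
   union of the sets g_i Z K (whose images are a basis of compact
   neighbourhoods in G/Z) *)
Definition compact_support_modZ (f : fnG) : Prop :=
  exists gs : seq M2, (forall h, List.In h gs -> inG h) /\
    forall g, inG g -> f g <> 0 ->
      exists h z k, List.In h gs /\ inZ z /\ inK k /\ g = mmul (mmul h z) k.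

Definition in_Hfin (f : fnG) : Prop :=
  Z_invariant f /\ locally_constant f /\ compact_support_modZ f.

Definition not_identically_zero (f : fnG) : Prop :=
  exists g, inG g /\ f g <> 0.

Definition bi_invariant (P : M2 -> Prop) (f : fnG) : Prop :=
  forall k1 g k2, P k1 -> inG g -> P k2 -> f (mmul (mmul k1 g) k2) = f g.

Definition level (f : fnG) (N : nat) : Prop :=
  (0 < N)%N /\ bi_invariant (inKN N) f /\
  forall M : nat, (0 < M)%N -> bi_invariant (inKN M) f -> (N <= M)%N.

Definition controls_support (f : fnG) (y : rat) : Prop :=
  0 < y /\
  forall g, inG g -> f g <> 0 ->
    exists z k, inZ z /\ inK k /\ g = mmul (mmul (mmul (a_ y^-1) z) k) (a_ y).

Definition geometric_assumptions (f : fnG) : Prop :=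
  bi_invariant inAZhat f /\ exists y : rat, controls_support f y.

(* Pick g with f(g) <> 0.  The unipotent u = [[1, N], [0, 1]] lies in
   K(N), so f(gu) = f(g) <> 0 and both g and gu lie in a(y)^-1 Z K a(y); hence
   a(y) u a(y)^-1 = [[1, yN], [0, 1]] lies in Z K, i.e. equals s k with s a
   scalar and k in GL_2(Zhat).  Its first column is the unit vector, so
   s k_11 = 1, and then s k_12 = k_12 (k^-1)_11 lies in Zhat.  Thus the positive
   rational yN lies in Zhat, so it is a natural number.  The lower unipotent
   [[1, 0], [N, 1]] is conjugated to [[1, 0], [N/y, 1]] and gives N/y. *)

From HB Require Import structures.
From mathcomp Require Import all_boot all_order all_algebra.
From mathcomp Require Import boolp complex Rstruct.
From mathcomp Require Import ring zify.
Set Implicit Arguments. Unset Strict Implicit. Unset Printing Implicit Defensive.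
Import Order.TTheory GRing.Theory Num.Theory.
Local Open Scope ring_scope.

(** * Congruences of rationals *)

Definition eqmodq (n : nat) (r s : rat) : bool := (r - s) / n%:R \is a Num.int.

Lemma eqmodqxx n r : eqmodq n r r.
Proof. by rewrite /eqmodq subrr mul0r. Qed.

Lemma eqmodq_sym n r s : eqmodq n r s -> eqmodq n s r.
Proof. by rewrite /eqmodq -opprB mulNr rpredN. Qed.

Lemma eqmodq_trans n r s t : eqmodq n r s -> eqmodq n s t -> eqmodq n r t.
Proof. by rewrite /eqmodq => rs st; have := rpredD rs st; rewrite -mulrDl addrA subrK. Qed.

Lemma eqmodqD n r s r' s' :
  eqmodq n r s -> eqmodq n r' s' -> eqmodq n (r + r') (s + s').
Proof. by rewrite /eqmodq => rs rs'; have := rpredD rs rs'; rewrite -mulrDl opprD addrACA. Qed.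

Lemma eqmodqN n r s : eqmodq n r s -> eqmodq n (- r) (- s).
Proof. by rewrite /eqmodq -opprD mulNr rpredN. Qed.

Lemma eqmodq_dvd n m r s : (0 < m)%N -> (n %| m)%N -> eqmodq m r s -> eqmodq n r s.
Proof.
move=> m_gt0 /dvdnP[q def_m]; move: m_gt0; rewrite def_m muln_gt0 => /andP[q_gt0 n_gt0].
have q_neq0 : q%:R != 0 :> rat by rewrite pnatr_eq0 -lt0n.
rewrite /eqmodq natrM invfM mulrA => rs.
have -> : (r - s) / n%:R = (r - s) / q%:R / n%:R * q%:R.
  by rewrite [_ / q%:R / _]mulrAC divfK.
by rewrite rpredM ?rpred_nat.
Qed.

Lemma eqmodqMr n M a a' b e : (0 < M)%N -> (n * e %| M)%N ->
  e%:R * b \is a Num.int -> eqmodq M a a' -> eqmodq n (a * b) (a' * b).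
Proof.
move=> M_gt0 /dvdnP[q def_M] eb; move: M_gt0.
rewrite def_M !muln_gt0 => /andP[q_gt0 /andP[n_gt0 e_gt0]] aa'.
have nat_neq0 k : (0 < k)%N -> k%:R != 0 :> rat by rewrite pnatr_eq0 -lt0n.
rewrite /eqmodq in aa' *.
have -> : (a * b - a' * b) / n%:R = (a - a') / (q * (n * e))%:R * q%:R * (e%:R * b).
  by rewrite !natrM; field; rewrite !nat_neq0.
by rewrite rpredM ?(rpredM aa') ?rpred_nat.
Qed.

Lemma modq0 r : modq r 0 = 0.
Proof. by rewrite /modq eqxx. Qed.

Section ModqPos.
Variable n : nat.
Hypothesis n_gt0 : (0 < n)%N.
Let n_neq0 : n%:R != 0 :> rat. Proof. by rewrite pnatr_eq0 -lt0n. Qed.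
Let modqE r : modq r n = r - n%:R * (Num.floor (r / n%:R))%:~R.
Proof. by rewrite /modq -[n]prednK. Qed.

Lemma eqmodqP r s : eqmodq n r s -> exists2 k, k \is a Num.int & r = s + n%:R * k.
Proof. by move=> rs; exists ((r - s) / n%:R); rewrite // mulrC divfK // addrC subrK. Qed.

Lemma eqmodq_modq r : eqmodq n r (modq r n).
Proof. by rewrite /eqmodq modqE opprB addrC subrK mulrC mulKf. Qed.

Lemma modq_eqmodq r : eqmodq n (modq r n) r.
Proof. exact/eqmodq_sym/eqmodq_modq. Qed.

Lemma modq_range r : 0 <= modq r n /\ modq r n < n%:R.
Proof.
have n_gt0' : 0 < n%:R :> rat by rewrite ltr0n.
rewrite modqE; have /andP[lb ub] := floor_itv (r / n%:R).
set q := r / n%:R in lb ub *; set k : rat := (Num.floor q)%:~R in lb ub *.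
have def_r : r = n%:R * q by rewrite /q mulrC divfK.
rewrite {1}def_r; rewrite rmorphD /= in ub.
split; first by rewrite subr_ge0 ler_pM2l.
have : n%:R * (q - k) < n%:R * 1 by rewrite ltr_pM2l // ltrBlDl.
by rewrite mulrBr mulr1 -def_r.
Qed.

Lemma modq_unique r s : 0 <= s -> s < n%:R -> eqmodq n r s -> modq r n = s.
Proof.
move=> s_ge0 s_lt /eqmodqP[k k_int ->].
have n_gt0' : 0 < n%:R :> rat by rewrite ltr0n.
rewrite modqE mulrDl [n%:R * k]mulrC mulfK // floorDrz //.
have -> : Num.floor (s / n%:R) = 0.
  apply: floor_def; rewrite add0r /= mulr0z mulr1z.
  by rewrite divr_ge0 ?ler0n //= ltr_pdivrMr // mul1r.
by rewrite add0r floorK // mulrC addrK.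
Qed.

Lemma modq_small s : 0 <= s -> s < n%:R -> modq s n = s.
Proof. by move=> s_ge0 s_lt; apply: modq_unique => //; apply: eqmodqxx. Qed.

Lemma eqmodq_modqE r s : eqmodq n r s -> modq r n = modq s n.
Proof.
move=> rs; have [lb ub] := modq_range s.
exact: modq_unique (eqmodq_trans rs (eqmodq_modq s)).
Qed.

End ModqPos.

Lemma eqmodq_modq_dvd r n m : (0 < n)%N -> (0 < m)%N -> (n %| m)%N ->
  eqmodq n (modq r m) (modq r n).
Proof.
move=> n_gt0 m_gt0 nm; apply: (eqmodq_trans _ (eqmodq_modq n_gt0 r)).
exact: eqmodq_dvd m_gt0 nm (modq_eqmodq m_gt0 r).
Qed.

(** * Arithmetic of representatives of adeles *)

Lemma isIntE r : isInt r <-> r \is a Num.int.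
Proof. by rewrite /isInt Qint_def; split => [->|/eqP]. Qed.

Lemma absz_denq_gt0 r : (0 < absz (denq r))%N.
Proof. by rewrite absz_gt0 denq_neq0. Qed.

Lemma denq_mul_int r : (absz (denq r))%:R * r \is a Num.int.
Proof. by rewrite natr_absz gtr0_norm ?denq_gt0 // mulrC -numqE rpred_int. Qed.

Definition den_bounded (e : nat) (x : rawA) :=
  (0 < e)%N /\ forall k, e%:R * x k \is a Num.int.

Lemma den_bounded_modq e r k : e%:R * r \is a Num.int -> e%:R * modq r k \is a Num.int.
Proof.
move=> er; case: k => [|k]; first by rewrite modq0 mulr0.
have [j j_int ->] := eqmodqP (ltn0Sn k) (modq_eqmodq (ltn0Sn k) r).
by rewrite mulrDr rpredD // !rpredM ?rpred_nat.
Qed.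

Section ValidA.
Variable x : rawA.
Hypothesis x_valid : validA x.

Lemma validA_eqmodq n m : (0 < n)%N -> (0 < m)%N -> (n %| m)%N ->
  eqmodq n (x m) (x n).
Proof. by case: x_valid => _ [_ xE] n_gt0 m_gt0 nm; apply/isIntE/xE. Qed.

Lemma validA_range n : (0 < n)%N -> 0 <= x n /\ x n < n%:R.
Proof. by case: x_valid => _ [xr _]; apply: xr. Qed.

Lemma validA_modq n m : (0 < n)%N -> (0 < m)%N -> (n %| m)%N -> x n = modq (x m) n.
Proof.
move=> n_gt0 m_gt0 nm; have [lb ub] := validA_range n_gt0.
by rewrite (modq_unique n_gt0 lb ub (validA_eqmodq n_gt0 m_gt0 nm)).
Qed.

Lemma validA_den_bounded : den_bounded (absz (denq (x 1%N))) x.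
Proof.
split=> [|[|k]]; first exact: absz_denq_gt0.
  by case: x_valid => -> _; rewrite mulr0.
have [j j_int ->] := eqmodqP (ltn0Sn 0) (validA_eqmodq (ltn0Sn 0) (ltn0Sn k) (dvd1n _)).
by rewrite mul1r mulrDr rpredD ?denq_mul_int // rpredM ?rpred_nat.
Qed.

End ValidA.

Lemma validA_ratA q : validA (ratA q).
Proof.
split; first exact: modq0.
split=> [n n_gt0|n m n_gt0 m_gt0 nm]; first exact: modq_range.
exact/isIntE/eqmodq_modq_dvd.
Qed.

Lemma validA_aadd x y : validA x -> validA y -> validA (aadd x y).
Proof.
move=> vx vy; split; first exact: modq0.
split=> [n n_gt0|n m n_gt0 m_gt0 nm]; first exact: modq_range.
apply/isIntE; apply: eqmodq_trans (eqmodq_dvd m_gt0 nm (modq_eqmodq m_gt0 _)) _.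
apply: eqmodq_trans (eqmodq_modq n_gt0 _).
by apply: eqmodqD; apply: validA_eqmodq.
Qed.

Lemma validA_aneg x : validA x -> validA (aneg x).
Proof.
move=> vx; split; first exact: modq0.
split=> [n n_gt0|n m n_gt0 m_gt0 nm]; first exact: modq_range.
apply/isIntE; apply: eqmodq_trans (eqmodq_dvd m_gt0 nm (modq_eqmodq m_gt0 _)) _.
apply: eqmodq_trans (eqmodq_modq n_gt0 _).
by apply: eqmodqN; apply: validA_eqmodq.
Qed.

Lemma eqmodq_mul_validA x y ex ey n M L : validA x -> validA y ->
  den_bounded ex x -> den_bounded ey y -> (0 < M)%N -> (0 < L)%N ->
  (M %| L)%N -> (n * ex * ey %| M)%N -> eqmodq n (x L * y L) (x M * y M).
Proof.
move=> vx vy [_ xi] [_ yi] M_gt0 L_gt0 ML nM.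
apply: (@eqmodq_trans _ _ (x M * y L)).
  apply: (eqmodqMr M_gt0 _ (yi L) (validA_eqmodq vx M_gt0 L_gt0 ML)).
  by apply: dvdn_trans nM; rewrite -mulnA dvdn_mul // dvdn_mull.
rewrite ![x M * _]mulrC.
apply: (eqmodqMr M_gt0 _ (xi M) (validA_eqmodq vy M_gt0 L_gt0 ML)).
exact: dvdn_trans (dvdn_mulr _ _) nM.
Qed.

Lemma amulE x y ex ey n M : validA x -> validA y ->
  den_bounded ex x -> den_bounded ey y -> (0 < n)%N -> (0 < M)%N -> (n * ex * ey %| M)%N ->
  amul x y n = modq (x M * y M) n.
Proof.
move=> vx vy bndx bndy n_gt0 M_gt0 nM; rewrite /amul.
set D := (absz (denq (x 1%N)) * absz (denq (y 1%N)))%N.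
have nD_gt0 : (0 < n * D)%N by rewrite !muln_gt0 n_gt0 !absz_denq_gt0.
have L_gt0 : (0 < n * D * M)%N by rewrite muln_gt0 nD_gt0.
have := eqmodq_mul_validA vx vy bndx bndy M_gt0 L_gt0 (dvdn_mull _ (dvdnn M)) nM.
move/(eqmodq_modqE n_gt0) <-; apply: (eqmodq_modqE n_gt0); apply: eqmodq_sym.
apply: (eqmodq_mul_validA vx vy (validA_den_bounded vx) (validA_den_bounded vy)
                          nD_gt0 L_gt0 (dvdn_mulr _ (dvdnn _))).
by rewrite /D mulnA.
Qed.

Lemma validA_amul x y : validA x -> validA y -> validA (amul x y).
Proof.
move=> vx vy; split; first exact: modq0.
split=> [n n_gt0|n m n_gt0 m_gt0 nm]; first exact: modq_range.
have bndx := validA_den_bounded vx; have bndy := validA_den_bounded vy.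
set ex := absz _ in bndx; set ey := absz _ in bndy.
have L_gt0 : (0 < m * ex * ey)%N by rewrite !muln_gt0 m_gt0 bndx.1 bndy.1.
rewrite (amulE vx vy bndx bndy m_gt0 L_gt0) // (amulE vx vy bndx bndy n_gt0 L_gt0).
  exact/isIntE/eqmodq_modq_dvd.
by rewrite !dvdn_mul.
Qed.

Lemma den_bounded_ratA q : den_bounded (absz (denq q)) (ratA q).
Proof.
split=> [|k]; first exact: absz_denq_gt0.
exact: den_bounded_modq (denq_mul_int q).
Qed.

Lemma den_bounded_aadd x y ex ey :
  den_bounded ex x -> den_bounded ey y -> den_bounded (ex * ey) (aadd x y).
Proof.
move=> [ex_gt0 xb] [ey_gt0 bndy]; have e_gt0 : (0 < ex * ey)%N by rewrite muln_gt0 ex_gt0.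
split=> // k; apply: den_bounded_modq => //.
rewrite natrM mulrDr rpredD //; first by rewrite mulrAC rpredM ?rpred_nat.
by rewrite -mulrA rpredM ?rpred_nat.
Qed.

Lemma den_bounded_amul x y ex ey :
  den_bounded ex x -> den_bounded ey y -> den_bounded (ex * ey) (amul x y).
Proof.
move=> [ex_gt0 xb] [ey_gt0 bndy]; have e_gt0 : (0 < ex * ey)%N by rewrite muln_gt0 ex_gt0.
by split=> // k; apply: den_bounded_modq; rewrite // natrM mulrACA rpredM.
Qed.

Lemma aaddC x y : aadd x y = aadd y x.
Proof. by apply: funext => n; rewrite /aadd addrC. Qed.

Lemma amulC x y : validA x -> validA y -> amul x y = amul y x.
Proof.
move=> vx vy.
apply: funext => -[|n]; first by rewrite /amul !modq0.
have bndx := validA_den_bounded vx; have bndy := validA_den_bounded vy.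
set ex := absz _ in bndx; set ey := absz _ in bndy.
have M_gt0 : (0 < n.+1 * ex * ey)%N by rewrite !muln_gt0 bndx.1 bndy.1.
rewrite (amulE vx vy bndx bndy (ltn0Sn n) M_gt0 (dvdnn _)).
by rewrite (amulE vy vx bndy bndx (ltn0Sn n) M_gt0) 1?mulrC // mulnAC.
Qed.

Lemma amul_amulE x y z ex ey ez n : validA x -> validA y -> validA z ->
  den_bounded ex x -> den_bounded ey y -> den_bounded ez z -> (0 < n)%N ->
  amul x (amul y z) n = modq (x (n * (ex * ey * ez) ^ 2)%N *
                               (y (n * (ex * ey * ez) ^ 2)%N * z (n * (ex * ey * ez) ^ 2)%N)) n.
Proof.
move=> vx vy vz bndx bndy bndz n_gt0; have [ex_gt0 xi] := bndx.
have [ey_gt0 yi] := bndy; have [ez_gt0 zi] := bndz.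
set E := (ex * ey * ez)%N; set L := (n * E ^ 2)%N; set M := (n * E)%N.
have E_gt0 : (0 < E)%N by rewrite !muln_gt0 ex_gt0 ey_gt0.
have M_gt0 : (0 < M)%N by rewrite muln_gt0 n_gt0.
have L_gt0 : (0 < L)%N by rewrite muln_gt0 n_gt0 expn_gt0 E_gt0.
have vyz := validA_amul vy vz; have byz := den_bounded_amul bndy bndz.
rewrite (amulE vx vyz bndx byz n_gt0 M_gt0); last by apply/dvdnP; exists 1%N; rewrite /M /E; ring.
rewrite (amulE vy vz bndy bndz M_gt0 L_gt0); last first.
  by apply/dvdnP; exists ex; rewrite /L /M /E; ring.
apply: (eqmodq_modqE n_gt0); apply: (@eqmodq_trans _ _ (x M * (y L * z L))).
  rewrite ![x M * _]mulrC; apply: (eqmodqMr M_gt0 _ (xi M) (modq_eqmodq M_gt0 _)).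
  by apply/dvdnP; exists (ey * ez)%N; rewrite /M /E; ring.
apply: (@eqmodqMr n M _ _ _ (ey * ez)) => //.
- by apply/dvdnP; exists ex; rewrite /M /E; ring.
- by rewrite natrM mulrACA rpredM.
- by apply/eqmodq_sym/validA_eqmodq => //; apply/dvdnP; exists E; rewrite /L /M; ring.
Qed.

Section RingLaws.
Variables x y z : rawA.
Hypotheses (vx : validA x) (vy : validA y) (vz : validA z).

Lemma aaddA : aadd x (aadd y z) = aadd (aadd x y) z.
Proof.
apply: funext => -[|n]; rewrite /aadd; first by rewrite !modq0.
rewrite [RHS](eqmodq_modqE (ltn0Sn n) (eqmodqD (modq_eqmodq _ _) (eqmodqxx _ _))) //.
by rewrite [LHS](eqmodq_modqE (ltn0Sn n) (eqmodqD (eqmodqxx _ _) (modq_eqmodq _ _))) // addrA.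
Qed.

Lemma add0a : aadd azero x = x.
Proof.
apply: funext => -[|n]; rewrite /aadd /azero /ratA; first by rewrite !modq0; case: vx.
have [lb ub] := validA_range vx (ltn0Sn n).
by rewrite (modq_small (ltn0Sn n) (lexx 0)) ?ltr0n // add0r modq_small.
Qed.

Lemma aaddN : aadd x (aneg x) = azero.
Proof.
apply: funext => -[|n]; rewrite /aadd /aneg /azero /ratA; first by rewrite !modq0.
by rewrite (eqmodq_modqE (ltn0Sn n) (eqmodqD (eqmodqxx _ _) (modq_eqmodq _ _))) // subrr.
Qed.

Lemma amulA : amul x (amul y z) = amul (amul x y) z.
Proof.
apply: funext => -[|n]; first by rewrite /amul !modq0.
have bndx := validA_den_bounded vx; have bndy := validA_den_bounded vy.
have bndz := validA_den_bounded vz.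
set ex := absz _ in bndx; set ey := absz _ in bndy; set ez := absz _ in bndz.
rewrite (amul_amulE vx vy vz bndx bndy bndz (ltn0Sn n)).
rewrite (amulC (validA_amul vx vy) vz) (amulC vx vy).
rewrite (amul_amulE vz vy vx bndz bndy bndx (ltn0Sn n)).
have -> : (ez * ey * ex = ex * ey * ez)%N by ring.
by congr (modq _ _); ring.
Qed.

Lemma amulDr : amul x (aadd y z) = aadd (amul x y) (amul x z).
Proof.
apply: funext => -[|n]; first by rewrite /amul /aadd !modq0.
have n_gt0 := ltn0Sn n.
have bndx := validA_den_bounded vx; have bndy := validA_den_bounded vy.
have bndz := validA_den_bounded vz.
set ex := absz _ in bndx; set ey := absz _ in bndy; set ez := absz _ in bndz.
have [ex_gt0 xi] := bndx; have [ey_gt0 _] := bndy; have [ez_gt0 _] := bndz.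
set M := (n.+1 * ex * (ey * ez))%N.
have M_gt0 : (0 < M)%N by rewrite !muln_gt0 ex_gt0 ey_gt0 ez_gt0.
rewrite (amulE vx (validA_aadd vy vz) bndx (den_bounded_aadd bndy bndz) n_gt0 M_gt0 (dvdnn _)).
rewrite /aadd (amulE vx vy bndx bndy n_gt0 M_gt0); last by apply/dvdnP; exists ez; rewrite /M; ring.
rewrite (amulE vx vz bndx bndz n_gt0 M_gt0); last by apply/dvdnP; exists ey; rewrite /M; ring.
apply: (eqmodq_modqE n_gt0); apply: (@eqmodq_trans _ _ (x M * (y M + z M))).
  rewrite ![x M * _]mulrC; apply: (eqmodqMr M_gt0 _ (xi M) (modq_eqmodq M_gt0 _)).
  by apply/dvdnP; exists (ey * ez)%N; rewrite /M; ring.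
by rewrite mulrDr; apply: eqmodq_sym; apply: eqmodqD; apply: modq_eqmodq.
Qed.

Lemma mul1a : amul aone x = x.
Proof.
apply: funext => -[|n]; first by rewrite /amul modq0; case: vx.
have n_gt0 := ltn0Sn n.
have bndx := validA_den_bounded vx; set ex := absz _ in bndx; have [ex_gt0 _] := bndx.
have b1 := den_bounded_ratA 1; set e1 := absz _ in b1; have [e1_gt0 _] := b1.
set M := (2 * (n.+1 * e1 * ex))%N.
have M_gt1 : (1 < M)%N by rewrite /M; nia.
have M_gt0 : (0 < M)%N by apply: ltnW.
rewrite (amulE (validA_ratA 1) vx b1 bndx n_gt0 M_gt0); last by apply: dvdn_mull.
rewrite [ratA 1 M]modq_small ?ltr1n // mul1r.
by rewrite (validA_modq vx n_gt0 M_gt0) //; apply/dvdnP; exists (2 * e1 * ex)%N; rewrite /M; ring.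
Qed.

End RingLaws.

Lemma ratA_add p q : aadd (ratA p) (ratA q) = ratA (p + q).
Proof.
apply: funext => -[|n]; rewrite /aadd /ratA; first by rewrite !modq0.
by apply: eqmodq_modqE => //; apply: eqmodqD; apply: modq_eqmodq.
Qed.

Lemma ratA_mul p q : amul (ratA p) (ratA q) = ratA (p * q).
Proof.
apply: funext => -[|n]; first by rewrite /amul /ratA !modq0.
have n_gt0 := ltn0Sn n.
have bp := den_bounded_ratA p; have bq := den_bounded_ratA q.
set ep := absz _ in bp; set eq := absz _ in bq.
have [ep_gt0 _] := bp; have [eq_gt0 qi] := bq.
set M := (n.+1 * ep * eq)%N.
have M_gt0 : (0 < M)%N by rewrite !muln_gt0 ep_gt0 eq_gt0.
rewrite (amulE (validA_ratA p) (validA_ratA q) bp bq n_gt0 M_gt0 (dvdnn _)).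
rewrite {3}/ratA; apply: eqmodq_modqE => //.
apply: (@eqmodq_trans _ _ (p * ratA q M)).
  apply: (eqmodqMr M_gt0 _ (qi M) (modq_eqmodq M_gt0 _)).
  by apply/dvdnP; exists ep; rewrite /M; ring.
rewrite ![p * _]mulrC; apply: (eqmodqMr M_gt0 _ (denq_mul_int p) (modq_eqmodq M_gt0 _)).
by apply/dvdnP; exists eq; rewrite /M; ring.
Qed.

(** * The ring of finite adeles *)

Record adele := Adele { aval : rawA; avalP : validA aval }.

(* Equality of adeles is undecidable: the eqType and choiceType structures are
   the classical ones. *)
HB.instance Definition _ := gen_eqMixin adele.
HB.instance Definition _ := gen_choiceMixin adele.

Lemma adele_inj : injective aval.
Proof. by move=> [a va] [b vb] /= eab; subst b; congr Adele; apply: Prop_irrelevance. Qed.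

Definition adele_of_rat q := Adele (validA_ratA q).
Definition adele_add a b := Adele (validA_aadd (avalP a) (avalP b)).
Definition adele_opp a := Adele (validA_aneg (avalP a)).
Definition adele_mul a b := Adele (validA_amul (avalP a) (avalP b)).

Lemma adele_addA : associative adele_add.
Proof. by move=> a b c; apply: adele_inj; apply: aaddA; apply: avalP. Qed.

Lemma adele_addC : commutative adele_add.
Proof. by move=> a b; apply: adele_inj; apply: aaddC. Qed.

Lemma adele_add0 : left_id (adele_of_rat 0) adele_add.
Proof. by move=> a; apply: adele_inj; apply: add0a; apply: avalP. Qed.

Lemma adele_addN : left_inverse (adele_of_rat 0) adele_opp adele_add.
Proof. by move=> a; rewrite adele_addC; apply: adele_inj; apply: aaddN; apply: avalP. Qed.

HB.instance Definition _ :=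
  GRing.isZmodule.Build adele adele_addA adele_addC adele_add0 adele_addN.

Lemma adele_mulA : associative adele_mul.
Proof. by move=> a b c; apply: adele_inj; apply: amulA; apply: avalP. Qed.

Lemma adele_mulC : commutative adele_mul.
Proof. by move=> a b; apply: adele_inj; apply: amulC; apply: avalP. Qed.

Lemma adele_mul1 : left_id (adele_of_rat 1) adele_mul.
Proof. by move=> a; apply: adele_inj; apply: mul1a; apply: avalP. Qed.

Lemma adele_mulDl : left_distributive adele_mul adele_add.
Proof.
move=> a b c; rewrite !(adele_mulC _ c); apply: adele_inj.
by apply: amulDr; apply: avalP.
Qed.

Lemma adele_one_neq0 : adele_of_rat 1 != 0.
Proof.
apply/eqP => /(congr1 (fun a => aval a 2%N)) /=; rewrite /ratA.
by rewrite !modq_small ?ler0n ?ltr_nat.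
Qed.

HB.instance Definition _ := GRing.Zmodule_isComNzRing.Build adele
  adele_mulA adele_mulC adele_mul1 adele_mulDl adele_one_neq0.

Lemma adele_of_rat_is_nmod_morphism : nmod_morphism adele_of_rat.
Proof. by split=> // p q; apply: adele_inj; rewrite /= ratA_add. Qed.

Lemma adele_of_rat_is_monoid_morphism : monoid_morphism adele_of_rat.
Proof. by split=> // p q; apply: adele_inj; rewrite /= ratA_mul. Qed.

HB.instance Definition _ := GRing.isNmodMorphism.Build rat adele adele_of_rat
  adele_of_rat_is_nmod_morphism.
HB.instance Definition _ := GRing.isMonoidMorphism.Build rat adele adele_of_rat
  adele_of_rat_is_monoid_morphism.

(** * Matrices over the adeles *)

Definition toM2 (A : 'M[adele]_2) : M2 :=
  mkM2 (aval (A 0 0)) (aval (A 0 1)) (aval (A 1 0)) (aval (A 1 1)).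

Lemma toM2_mul A B : toM2 (A * B) = mmul (toM2 A) (toM2 B).
Proof.
rewrite /toM2 /mmul -mulmxE !mxE !big_ord_recl !big_ord0 !addr0.
have -> : ord0 = 0 :> 'I_2 by apply: val_inj.
by have -> : lift ord0 ord0 = 1 :> 'I_2 by apply: val_inj.
Qed.

Lemma toM2_1 : toM2 1 = mone.
Proof. by rewrite /toM2 !mxE. Qed.

Lemma ord2P (i : 'I_2) : i = 0 \/ i = 1.
Proof. by case: i => -[|[|//]] ?; [left|right]; apply: val_inj. Qed.

Lemma toM2_inj : injective toM2.
Proof.
move=> A B [/adele_inj e00 /adele_inj e01 /adele_inj e10 /adele_inj e11].
by apply/matrixP => i j; case: (ord2P i) => ->; case: (ord2P j) => ->.
Qed.

Lemma toM2_onto g : entries_in validA g -> exists A, g = toM2 A.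
Proof.
case: g => a b c d [va [vb [vc vd]]].
exists (\matrix_(i, j) if i == 0 then (if j == 0 then Adele va else Adele vb)
                       else (if j == 0 then Adele vc else Adele vd)).
by rewrite /toM2 !mxE.
Qed.

Definition zhat : {pred adele} := fun a => aval a 1%N == 0.

Lemma modq1_int r : r \is a Num.int -> modq r 1 = 0.
Proof. by move=> r_int; apply: modq_unique; rewrite // /eqmodq subr0 divr1. Qed.

Lemma zhat_int a k : a \in zhat -> aval a k \is a Num.int.
Proof.
move=> /eqP a1; case: k => [|k]; first by case: (avalP a) => ->.
have := validA_eqmodq (avalP a) (ltn0Sn 0) (ltn0Sn k) (dvd1n _).
by rewrite a1 /eqmodq subr0 divr1.
Qed.

Lemma zhat_subring_closed : subring_closed zhat.
Proof.
split=> [|a b za zb|a b za zb]; rewrite unfold_in /=.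
- by rewrite /ratA modq1_int.
- by rewrite /aadd /aneg (eqP zb) oppr0 (modq1_int (rpred0 _)) addr0 modq1_int ?zhat_int.
- by rewrite /amul modq1_int ?rpredM ?zhat_int.
Qed.

HB.instance Definition _ := GRing.isSubringClosed.Build adele zhat zhat_subring_closed.

Lemma rat_zhatE q : (adele_of_rat q \in zhat) = (q \is a Num.int).
Proof.
rewrite unfold_in /= /ratA; apply/idP/idP => [/eqP q1|q_int]; last by rewrite modq1_int.
by have := eqmodq_modq (ltn0Sn 0) q; rewrite q1 /eqmodq subr0 divr1.
Qed.

Lemma scaled_entry_unit_col (R : comPzRingType) n (s : R) (m w : 'M[R]_n) c a b :
  w *m m = 1%:M -> (forall k, s * m k c = (k == c)%:R) ->
  s * m a b = m a b * w c c.
Proof.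
move=> wm col_c.
(* [s * m a b = s * m a b * (w *m m) c c], and column [c] of [s *: m] is a unit vector. *)
have wm_cc : \sum_k w c k * m k c = 1 by have := congr1 (fun M : 'M[R]_n => M c c) wm; rewrite !mxE eqxx.
have w_cc : \sum_k w c k * (k == c)%:R = w c c.
  by rewrite (bigD1 c) //= eqxx mulr1 big1 ?addr0 // => k /negbTE ->; rewrite mulr0.
rewrite -[LHS]mulr1 -wm_cc mulr_sumr -w_cc mulr_sumr; apply: eq_bigr => k _.
by rewrite -col_c; ring.
Qed.

Section ElementaryMatrices.
Variables (R : comPzRingType) (n : nat).
Implicit Types (c : R) (i j : 'I_n).

Definition elem_mx i j c : 'M[R]_n := 1%:M + c *: delta_mx i j.

Lemma elem_mxE i j c k l : elem_mx i j c k l = (k == l)%:R + c * ((k == i) && (l == j))%:R.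
Proof. by rewrite !mxE. Qed.

Lemma elem_mx_col i j c k : i != j -> elem_mx i j c k i = (k == i)%:R.
Proof. by move=> ij; rewrite elem_mxE eq_sym (negbTE ij) andbF mulr0 addr0. Qed.

Lemma elem_mx_offdiag i j c : i != j -> elem_mx i j c i j = c.
Proof. by move=> ij; rewrite elem_mxE (negbTE ij) !eqxx add0r mulr1. Qed.

Lemma elem_mxN i j c : i != j -> elem_mx i j c *m elem_mx i j (- c) = 1%:M.
Proof.
move=> ij; rewrite /elem_mx mulmxDl !mulmxDr !mul1mx !mulmx1 -!scalemxAl -!scalemxAr.
by rewrite mul_delta_mx_cond eq_sym (negbTE ij) mulr0n !scaler0 addr0 scaleNr subrK.
Qed.

Lemma diag_conj_elem_mx (d d' : 'rV[R]_n) i j c : i != j ->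
  (forall k, d 0 k * d' 0 k = 1) ->
  diag_mx d *m elem_mx i j c *m diag_mx d' = elem_mx i j (d 0 i * c * d' 0 j).
Proof.
move=> ij dd'; apply/matrixP => k l; rewrite mul_mx_diag mul_diag_mx !mxE.
have [/andP[/eqP-> /eqP->]|kl_ij] := boolP ((k == i) && (l == j)).
  by rewrite (negbTE ij) /= !mulr1 !add0r.
rewrite /= !mulr0 !addr0.
by have [->|_] := eqVneq k l; rewrite ?mulr1 ?dd' // mulr0 mul0r.
Qed.

End ElementaryMatrices.

Definition GL2 (A : 'M[adele]_2) := exists B, A * B = 1 /\ B * A = 1.

Definition GL2_Zhat (A : 'M[adele]_2) :=
  exists B, [/\ A \is a mxOver zhat, B \is a mxOver zhat, A * B = 1 & B * A = 1].

Lemma mxOver_zhatE A : entries_in inZhat (toM2 A) <-> A \is a mxOver zhat.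
Proof.
have zhatE a : inZhat (aval a) <-> a \in zhat by split=> [[_ /eqP]|/eqP] //; split=> //; apply: avalP.
split=> [[/zhatE z00 [/zhatE z01 [/zhatE z10 /zhatE z11]]]|/mxOverP zA].
  by apply/mxOverP => i j; case: (ord2P i) => ->; case: (ord2P j) => ->.
by split; [|split; [|split]]; apply/zhatE/zA.
Qed.

Lemma inG_GL2 g : inG g -> exists2 A, g = toM2 A & GL2 A.
Proof.
case=> /toM2_onto[A ->] [h [/toM2_onto[B ->] [AB BA]]].
by exists A => //; exists B; split; apply: toM2_inj; rewrite toM2_mul toM2_1.
Qed.

Lemma GL2_inG A : GL2 A -> inG (toM2 A).
Proof.
have valid_toM2 C : entries_in validA (toM2 C) by split; [|split; [|split]]; apply: avalP.
by case=> B [AB BA]; split=> //; exists (toM2 B); rewrite -!toM2_mul AB BA toM2_1.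
Qed.

Lemma inK_GL2_Zhat k : inK k -> exists2 K, k = toM2 K & GL2_Zhat K.
Proof.
have valid_of_zhat g : entries_in inZhat g -> entries_in validA g.
  by case=> [[? _] [[? _] [[? _] [? _]]]].
case=> zk [h [zh [kh hk]]].
have [K def_k] := toM2_onto (valid_of_zhat _ zk).
have [H def_h] := toM2_onto (valid_of_zhat _ zh).
rewrite def_k def_h in zk zh kh hk; exists K => //; exists H.
by split; [exact/mxOver_zhatE|exact/mxOver_zhatE|..]; apply: toM2_inj; rewrite toM2_mul toM2_1.
Qed.

Lemma inZ_scalar z : inZ z -> exists t t', z = toM2 t%:M /\ t * t' = 1.
Proof.
case=> t [[vt [t' [vt' [tt' _]]]] ->]; exists (Adele vt), (Adele vt').
by split; [rewrite /toM2 !mxE|apply: adele_inj].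
Qed.

Lemma inKN_GL2_Zhat N U : GL2_Zhat U ->
  (forall i j, aval ((U - 1) i j) N = 0) -> inKN N (toM2 U).
Proof.
move=> [V [zU zV UV VU]] U1.
have NZhat i j : inNZhat N (aval ((U - 1) i j)) by split; [apply: avalP|apply: U1].
split.
  split; first exact/mxOver_zhatE.
  by exists (toM2 V); split; [exact/mxOver_zhatE|rewrite -!toM2_mul UV VU toM2_1].
have e00 : (U - 1) 0 0 = U 0 0 - 1 by rewrite !mxE.
have e01 : (U - 1) 0 1 = U 0 1 by rewrite !mxE /= subr0.
have e10 : (U - 1) 1 0 = U 1 0 by rewrite !mxE /= subr0.
have e11 : (U - 1) 1 1 = U 1 1 - 1 by rewrite !mxE.
by move: (NZhat 0 0) (NZhat 0 1) (NZhat 1 0) (NZhat 1 1); rewrite e00 e01 e10 e11.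
Qed.

Definition dy (y : rat) : 'rV[rat]_2 := \row_k (if k == 0 then y else 1).
Definition ay (y : rat) : 'M[rat]_2 := diag_mx (dy y).

Lemma a_toM2 y : a_ y = toM2 (map_mx adele_of_rat (ay y)).
Proof. by rewrite /toM2 !mxE. Qed.

Lemma dy_mulV y k : y != 0 -> dy y 0 k * dy y^-1 0 k = 1.
Proof. by move=> y_neq0; rewrite !mxE; case: ifP => _; [apply: mulfV|apply: mulr1]. Qed.

Lemma ay_mulV y : y != 0 -> ay y *m ay y^-1 = 1%:M.
Proof.
move=> y_neq0; apply/matrixP => k l; have := dy_mulV k y_neq0.
by rewrite mul_diag_mx !mxE mulrnAr => ->.
Qed.

Lemma aval_rat_natrM N b : (0 < N)%N -> b \is a Num.int -> aval (adele_of_rat (N%:R * b)) N = 0.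
Proof.
move=> N_gt0 b_int; apply: modq_unique; rewrite ?ltr0n //.
by rewrite /eqmodq subr0 [N%:R * b]mulrC mulfK // pnatr_eq0 -lt0n.
Qed.

Lemma map_mx_zhat (A : 'M[rat]_2) :
  (forall i j, A i j \is a Num.int) -> map_mx adele_of_rat A \is a mxOver zhat.
Proof. by move=> A_int; apply/mxOverP => i j; rewrite mxE rat_zhatE. Qed.

Lemma elem_mx_KN N (i j : 'I_2) : (0 < N)%N -> i != j ->
  inKN N (toM2 (map_mx adele_of_rat (elem_mx i j N%:R))).
Proof.
move=> N_gt0 ij; apply: inKN_GL2_Zhat.
  have elem_int (c : rat) k l : c \is a Num.int -> elem_mx i j c k l \is a Num.int.
    by move=> c_int; rewrite elem_mxE rpredD ?rpredM ?rpred_nat.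
  exists (map_mx adele_of_rat (elem_mx i j (- N%:R))); split.
  - by apply: map_mx_zhat => k l; apply: elem_int; apply: rpred_nat.
  - by apply: map_mx_zhat => k l; apply: elem_int; rewrite rpredN rpred_nat.
  - by rewrite -mulmxE -map_mxM elem_mxN // map_mx1.
  - by rewrite -mulmxE -map_mxM -{2}[N%:R]opprK elem_mxN // map_mx1.
move=> k l; have -> : 1 = map_mx adele_of_rat 1%:M :> 'M_2 by rewrite map_mx1.
rewrite -map_mxB /elem_mx addrC addKr mxE mxE.
by apply: aval_rat_natrM => //; rewrite mxE rpred_nat.
Qed.

Lemma scaled_zhat_int (Q : 'M[rat]_2) c s K : GL2_Zhat K ->
  map_mx adele_of_rat Q = s *: K -> (forall k, Q k c = (k == c)%:R) ->
  forall a b, Q a b \is a Num.int.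
Proof.
move=> [W [zK zW _ WK]] QsK Qc a b.
have QE k l : adele_of_rat (Q k l) = s * K k l.
  by have := congr1 (fun M : 'M_2 => M k l) QsK; rewrite !mxE.
rewrite -rat_zhatE QE (@scaled_entry_unit_col _ _ s K W c) ?mulmxE //.
  by rewrite rpredM ?(mxOverP zK) ?(mxOverP zW).
by move=> k; rewrite -QE Qc rmorph_nat.
Qed.

(** * Conjugating K(N) by a(y) *)

Section ControlledSupport.
Variables (f : fnG) (N : nat) (y : rat).
Hypotheses (fN : bi_invariant (inKN N) f) (fy : controls_support f y).

Let Y := map_mx adele_of_rat (ay y).
Let Yi := map_mx adele_of_rat (ay y^-1).

Let y_neq0 : y != 0. Proof. by case: fy => /gt_eqF/negbT. Qed.

Let YYi : Y * Yi = 1.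
Proof. by rewrite -mulmxE -map_mxM ay_mulV // map_mx1. Qed.

Let YiY : Yi * Y = 1.
Proof.
by rewrite -mulmxE -map_mxM -{2}[y]invrK ay_mulV ?map_mx1 // invr_eq0.
Qed.

Lemma support_conj G : GL2 G -> f (toM2 G) <> 0 ->
  exists t t' K, [/\ t * t' = 1, GL2_Zhat K & Y * G * Yi = t *: K].
Proof.
move=> GG fG; have [_ supp] := fy.
have [z [k [zZ [kK defG]]]] := supp _ (GL2_inG GG) fG.
have [t [t' [def_z tt']]] := inZ_scalar zZ; have [K def_k zK] := inK_GL2_Zhat kK.
exists t, t', K; split => //.
rewrite def_z def_k !a_toM2 -!toM2_mul in defG; move/toM2_inj: defG => ->.
by rewrite !mulrA YYi mul1r -mulrA YYi mulr1 -mulmxE mul_scalar_mx.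
Qed.

Lemma mone_KN : inKN N mone.
Proof.
rewrite -toM2_1; apply: inKN_GL2_Zhat => [|i j].
  by exists 1; split; rewrite ?mulr1 // mxOver_scalar ?rpred0 ?rpred1.
rewrite subrr mxE /= /ratA; case: (N) => [|n]; [exact: modq0|exact: modq_small].
Qed.

Lemma conj_KN_scaled_GL2_Zhat G U : GL2 G -> f (toM2 G) <> 0 -> inKN N (toM2 U) ->
  exists s K, GL2_Zhat K /\ Y * U * Yi = s *: K.
Proof.
move=> GG fG UN; have [G' [GG' G'G]] := GG.
have [_ /toM2_inj <- [V [_ _ UV VU]]] := inK_GL2_Zhat UN.1.
have GU : GL2 (G * U).
  by exists (V * G'); rewrite !mulrA -(mulrA G) UV mulr1 GG' -(mulrA V) G'G mulr1 VU.
have fGU : f (toM2 (G * U)) <> 0.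
  by rewrite -[G]mul1r !toM2_mul toM2_1 fN //; [exact: mone_KN|exact: GL2_inG].
have [t [t' [K [tt' [KH [zK zKH KKH KHK]] eG]]]] := support_conj GG fG.
have [u [_ [K' [_ [K'H [zK' zK'H K'K'H K'HK']] eGU]]]] := support_conj GU fGU.
(* [Y U Yi = (Y G Yi)^-1 (Y (G U) Yi)], a product of two elements of [Z GL_2(Zhat)]. *)
have eX : t *: K * (Y * U * Yi) = u *: K'.
  by rewrite -eG -eGU !mulrA -[Y * G * Yi * Y]mulrA YiY mulr1.
have inv : (t' *: KH) * (t *: K) = 1 by rewrite -scalerAl -scalerAr scalerA KHK mulrC tt' scale1r.
exists (t' * u), (KH * K'); split.
  exists (K'H * K); split; rewrite ?mxOverM //.
    by rewrite mulrA -(mulrA KH) K'K'H mulr1 KHK.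
  by rewrite mulrA -(mulrA K'H) KKH mulr1 K'HK'.
by rewrite -[Y * U * Yi]mul1r -inv -(mulrA (t' *: KH)) eX -scalerAl -scalerAr scalerA.
Qed.

Lemma conj_elem_mx_int i j : (0 < N)%N -> i != j -> not_identically_zero f ->
  dy y 0 i * N%:R * dy y^-1 0 j \is a Num.int.
Proof.
move=> N_gt0 ij [g [gG fg]]; have [G defg GG] := inG_GL2 gG; rewrite defg in fg.
have [s [K [zK eU]]] := conj_KN_scaled_GL2_Zhat GG fg (elem_mx_KN N_gt0 ij).
rewrite /Y /Yi /ay -!mulmxE -!map_mxM diag_conj_elem_mx // in eU; last first.
  by move=> k; apply: dy_mulV.
have := scaled_zhat_int zK eU (fun k => elem_mx_col _ k ij) i j.
by rewrite elem_mx_offdiag.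
Qed.

End ControlledSupport.

Theorem lemma3p5 (f : fnG) (N : nat) (y : rat) :
  in_Hfin f -> not_identically_zero f -> geometric_assumptions f ->
  level f N -> controls_support f y ->
  (exists n : nat, y * N%:R = n%:R) /\ (exists m : nat, N%:R / y = m%:R).
Proof.
move=> _ f_nz _ [N_gt0 [fN _]] fy; have y_ge0 : 0 <= y by case: fy => /ltW.
have := conj_elem_mx_int fN fy N_gt0 (isT : 0 != 1 :> 'I_2) f_nz.
have := conj_elem_mx_int fN fy N_gt0 (isT : 1 != 0 :> 'I_2) f_nz.
rewrite !mxE /= mulr1 mul1r => Ny_int yN_int.
split; apply/natrP; rewrite natrEint ?yN_int ?Ny_int /=.
  by rewrite mulr_ge0 ?ler0n.
by rewrite divr_ge0 ?ler0n.
Qed.
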